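(* If $\mathbb P(T(X)>1-\alpha)>0$, then $G(D^\mu,C^\mu)<0$ for all sufficiently large $\mu$.
   Context: Let $(X,Y)\sim P_{XY}$ on $\mathcal X\times\mathcal Y$, $\alpha\in(0,1)$. $\mathcal I$ is a finite collection of subsets of $\mathcal Y$ enumerated in a fixed lexicographic order, $w:\mathcal I\to(0,B)$ a bounded positive weight. For $C\in\mathcal I$ let $p_C(x)=\mathbb P(Y\in C\mid X=x)$, $\ell_{x,C}(\mu)=w(C)p_C(x)+\mu(p_C(x)-(1-\alpha))$ for $\mu\ge0$, $\mathcal U_x(\mu)=\max_{C\in\mathcal I}\ell_{x,C}(\mu)$. $C^\mu(x)$ is a maximizer of $\ell_{x,C}(\mu)$ over $C\in\mathcal I$, ties broken in favor of the largest $w(C)$ and then smallest index; $D^\mu(x)=\mathbb 1\{\mathcal U_x(\mu)\ge0\}$; $T(x)=\max_{C\in\mathcal I}p_C(x)$; $G(D,C)=\mathbb E[(1-p_{C(X)}(X)-\alpha)D(X)]$. *)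

From HB Require Import structures.
From mathcomp Require Import all_boot all_order all_algebra.
From mathcomp Require Import all_classical all_reals all_analysis.
Set Implicit Arguments. Unset Strict Implicit. Unset Printing Implicit Defensive.
Import Order.TTheory GRing.Theory Num.Theory.
Local Open Scope ring_scope.

(* The finite collection I of subsets of Y is indexed by 'I_n.+1 in its fixed
   (lexicographic) enumeration order; p i x stands for p_{C_i}(x). *)
Section Defs.
Variables (R : realType) (Xs : Type) (n : nat).
Variables (p : 'I_n.+1 -> Xs -> R) (w : 'I_n.+1 -> R) (alpha : R).

Definition ell (mu : R) (x : Xs) (i : 'I_n.+1) : R :=
  w i * p i x + mu * (p i x - (1 - alpha)).

Definition Ux (x : Xs) (mu : R) : R :=
  \big[Num.max/ell mu x ord0]_(i < n.+1) ell mu x i.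

Definition is_maximizer (mu : R) (x : Xs) (i : 'I_n.+1) : bool :=
  [forall j, ell mu x j <= ell mu x i].

Definition Cmu (mu : R) (x : Xs) : 'I_n.+1 :=
  odflt ord0 [pick i | [&& is_maximizer mu x i,
     [forall j, is_maximizer mu x j ==> (w j <= w i)] &
     [forall j, (is_maximizer mu x j && (w j == w i)) ==> (i <= j)%N]]].

Definition Dmu (mu : R) (x : Xs) : bool := 0 <= Ux x mu.

Definition Tmax (x : Xs) : R := \big[Num.max/p ord0 x]_(i < n.+1) p i x.
End Defs.

Definition Gfun (R : realType) (d : measure_display) (Omega : measurableType d)
  (P : probability Omega R) (Xs : Type) (X : Omega -> Xs) (n : nat)
  (p : 'I_n.+1 -> Xs -> R) (alpha : R)
  (D : Xs -> bool) (C : Xs -> 'I_n.+1) : \bar R :=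
  (\int[P]_(om in setT) ((1 - p (C (X om)) (X om) - alpha) * (D (X om))%:R)%:E)%E.

From HB Require Import structures.
From mathcomp Require Import all_boot all_order all_algebra.
From mathcomp Require Import all_classical all_reals all_analysis.
From mathcomp Require Import lra measurable_realfun.
Set Implicit Arguments. Unset Strict Implicit. Unset Printing Implicit Defensive.
Import Order.TTheory GRing.Theory Num.Theory.
Local Open Scope classical_set_scope.
Local Open Scope ring_scope.

(* If D^mu(x) = 1 then mu (1 - alpha - p_C(x)) <= w(C) p_C(x) < B for
   C = C^mu(x), so the integrand of G is at most B / mu everywhere; where
   T(x) > 1 - alpha + delta it is at most - delta / 2 as soon as
   B / mu <= delta / 2.  As {T > 1 - alpha} is the union of the sets
   {T > 1 - alpha + 1 / (k + 1)}, one of them has positive probability q, and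
   then G <= B / mu - q delta / 2 < 0 for mu large.  The integrand is not known
   to be measurable, so only monotonicity of integrals of nonnegative functions
   is used. *)

Lemma set_gt_bigcup (R : realType) (T : Type) (g : T -> R) (c : R) :
  [set x | c < g x] = \bigcup_k [set x | c + k.+1%:R^-1 < g x].
Proof.
apply/seteqP; split => x /=; first by move=> /ltr_add_invr[k ?]; exists k.
by move=> [k _ /=]; apply: lt_trans; rewrite ltrDl invr_gt0.
Qed.

Lemma bigcup_measure_gt0 d (T : measurableType d) (R : realType)
    (mu : {measure set T -> \bar R}) (F : nat -> set T) :
  (forall k, measurable (F k)) ->
  (0 < mu (\bigcup_k F k))%E -> exists k, (0 < mu (F k))%E.
Proof.
move=> mF; apply: contraPP => /forallNP muF0.
suff -> : mu (\bigcup_k F k) = 0%E by rewrite ltxx.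
apply/negligibleP; first exact: bigcupT_measurable.
apply: negligible_bigcup => k; apply/negligibleP => //.
by apply/eqP; rewrite eq_le measure_ge0 andbT leNgt; apply/negP/muF0.
Qed.

(* No measurability is needed: the integral of a nonnegative function is the
   supremum of the integrals of the simple functions below it. *)
Lemma ge0_le_integralT d (T : measurableType d) (R : realType)
    (mu : {measure set T -> \bar R}) (f g : T -> \bar R) :
  (forall x, 0 <= f x)%E -> (forall x, f x <= g x)%E ->
  (\int[mu]_x f x <= \int[mu]_x g x)%E.
Proof.
move=> f0 fg; rewrite ge0_integralTE // ge0_integralTE; last first.
  by move=> x; exact: le_trans (f0 x) (fg x).
apply: ereal_sup_le => _ [h hf <-]; exists h => //= x.
exact: le_trans (hf x) (fg x).
Qed.

Lemma probability_integral_le d (T : measurableType d) (R : realType)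
    (P : probability T R) (f : T -> R) (S : set T) (c e : R) :
  measurable S -> 0 <= c -> 0 <= e ->
  (forall x, f x <= c) -> (forall x, S x -> f x <= - e) ->
  (\int[P]_x (f x)%:E <= (c - e * fine (P S))%:E)%E.
Proof.
move=> mS c0 e0 fc fS; rewrite integralE EFinB.
have PS : P S = (fine (P S))%:E by rewrite fineK // fin_num_measure.
apply: leeB.
- apply: le_trans (@ge0_le_integralT _ _ _ P _ (cst c%:E) _ _) _.
  + exact: funepos_ge0.
  + by move=> x; rewrite funeposE ge_max !lee_fin fc.
  + by rewrite integral_cst //= probability_setT mule1.
- rewrite EFinM -PS -integral_cst // integral_mkcond.
  apply: ge0_le_integralT => x; rewrite /patch ?funenegE.
  + by case: ifP; rewrite lee_fin.
  + case: ifP => [/set_mem Sx|_]; last by rewrite le_max lexx orbT.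
    by rewrite le_max -EFinN lee_fin lerNr fS.
Qed.

Lemma measurable_Tmax d (T : measurableType d) (R : realType) n
    (p : 'I_n.+1 -> T -> R) :
  (forall i, measurable_fun setT (p i)) -> measurable_fun setT (Tmax p).
Proof.
move=> mp; rewrite /Tmax; elim: (index_enum _) => [|i s ih].
  by under eq_fun do rewrite big_nil; exact: mp.
by under eq_fun do rewrite big_cons; exact: measurable_maxr.
Qed.

Section pointwise.
Variables (R : realType) (Xs : Type) (n : nat).
Variables (p : 'I_n.+1 -> Xs -> R) (w : 'I_n.+1 -> R) (alpha : R).

Lemma Cmu_is_maximizer mu x : is_maximizer p w alpha mu x (Cmu p w alpha mu x).
Proof.
rewrite /Cmu; case: pickP => [i /and3P[] // | none].
have [i1 _ ell_max] := arg_maxP (ell p w alpha mu x) (isT : predT ord0).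
have max_i1 : is_maximizer p w alpha mu x i1.
  by apply/forallP => j; exact: ell_max.
have [i2 max_i2 w_max] := arg_maxP w max_i1.
pose tie j := is_maximizer p w alpha mu x j && (w j == w i2).
have tie_i2 : tie i2 by rewrite /tie max_i2 eqxx.
have [i3 /andP[max_i3 /eqP w_i3] i3_min] := arg_minnP (@nat_of_ord _) tie_i2.
case/negP: (negbT (none i3)); rewrite max_i3 /=; apply/andP; split.
- by apply/forallP => j; apply/implyP => max_j; rewrite w_i3; exact: w_max.
- apply/forallP => j; apply/implyP => /andP[max_j /eqP w_j].
  by apply: i3_min; rewrite /tie max_j w_j w_i3 eqxx.
Qed.

Lemma ell_le_Ux mu x i : ell p w alpha mu x i <= Ux p w alpha x mu.
Proof. exact: le_bigmax. Qed.

Lemma Ux_Cmu mu x : Ux p w alpha x mu = ell p w alpha mu x (Cmu p w alpha mu x).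
Proof.
apply: le_anti; rewrite ell_le_Ux andbT.
by apply: bigmax_le => [|i _]; exact: (forallP (Cmu_is_maximizer mu x)).
Qed.

Lemma lt_Tmax c x : c < Tmax p x -> exists i, c < p i x.
Proof. by case/bigmax_gtP => [|[i _]]; [exists ord0 | exists i]. Qed.

Definition Gintegrand mu x :=
  (1 - p (Cmu p w alpha mu x) x - alpha) * (Dmu p w alpha mu x)%:R.

Variable B : R.
Hypothesis hw : forall i, 0 < w i < B.
Hypothesis p01 : forall i x, 0 <= p i x <= 1.

Lemma wp_lt i x : w i * p i x < B.
Proof. by have /andP[w0 wB] := hw i; have /andP[p0 p1] := p01 i x; nra. Qed.

Lemma B_gt0 : 0 < B.
Proof. by have /andP[w0 wB] := hw ord0; exact: lt_trans wB. Qed.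

Lemma Gintegrand_le mu x : 0 < mu -> Gintegrand mu x <= B / mu.
Proof.
move=> mu0; rewrite /Gintegrand /Dmu Ux_Cmu /ell.
set c := Cmu p w alpha mu x.
have [D1|_] := boolP (0 <= _); last by rewrite mulr0 divr_ge0 // ltW // B_gt0.
have := wp_lt c x; have /andP[w0 _] := hw c; have /andP[p0 _] := p01 c x.
by rewrite mulr1 ler_pdivlMr //; nra.
Qed.

(* Where T(x) > 1 - alpha + delta, the set attaining T makes ell exceed
   mu delta, and a maximizer can only match it if its p_C exceeds
   1 - alpha + delta / 2. *)
Lemma Gintegrand_le_neg mu x delta :
  0 < mu -> B / mu <= delta / 2 -> 1 - alpha + delta < Tmax p x ->
  Gintegrand mu x <= - (delta / 2).
Proof.
move=> mu0; rewrite ler_pdivrMr // => Bmu /lt_Tmax[i hi].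
set c := Cmu p w alpha mu x.
have /forallP/(_ i) ell_ic := Cmu_is_maximizer mu x; rewrite -/c /ell in ell_ic.
have /andP[wi0 _] := hw i; have /andP[pi0 _] := p01 i x.
have wpi : 0 <= w i * p i x := mulr_ge0 (ltW wi0) pi0.
have mu_delta : mu * delta < mu * (p i x - (1 - alpha)).
  by rewrite ltr_pM2l //; lra.
have wpc := wp_lt c x.
have D1 : Dmu p w alpha mu x.
  by rewrite /Dmu Ux_Cmu /ell -/c; have := B_gt0; lra.
have : mu * (delta / 2) <= mu * (p c x - (1 - alpha)) by nra.
by rewrite /Gintegrand D1 mulr1 ler_pM2l // => ?; lra.
Qed.

End pointwise.

Theorem proposition6 (R : realType)
  (d : measure_display) (Omega : measurableType d) (P : probability Omega R)
  (dx : measure_display) (Xs : measurableType dx)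
  (dy : measure_display) (Ys : measurableType dy)
  (X : Omega -> Xs) (Y : Omega -> Ys)
  (mX : measurable_fun setT X) (mY : measurable_fun setT Y)
  (alpha : R) (halpha : 0 < alpha < 1)
  (n : nat) (Cs : 'I_n.+1 -> set Ys) (Cs_inj : injective Cs)
  (mCs : forall i, measurable (Cs i))
  (w : 'I_n.+1 -> R) (B : R) (hw : forall i, 0 < w i < B)
  (p : 'I_n.+1 -> Xs -> R)
  (mp : forall i, measurable_fun setT (p i))
  (p01 : forall i x, 0 <= p i x <= 1)
  (hp : forall i (A : set Xs), measurable A ->
     P (X @^-1` A `&` Y @^-1` Cs i) =
     (\int[P]_(om in X @^-1` A) (p i (X om))%:E)%E) :
  (0 < P [set om | (1 - alpha < Tmax p (X om))%R])%E ->
  exists M : R, forall mu : R, M <= mu ->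
    (Gfun P X p alpha (Dmu p w alpha mu) (Cmu p w alpha mu) < 0)%E.
Proof.
move=> T_pos.
pose S k := [set om | 1 - alpha + k.+1%:R^-1 < Tmax p (X om)].
have mS k : measurable (S k).
  have := measurableT_comp (measurable_Tmax mp) mX measurableT
    (measurable_itv `]1 - alpha + k.+1%:R^-1, +oo[).
  rewrite setTI; congr measurable.
  by apply/seteqP; split => om; rewrite /= in_itv /= andbT.
have [k PSk_gt0] : exists k, (0 < P (S k))%E.
  by apply: bigcup_measure_gt0 => //; rewrite -set_gt_bigcup.
set delta : R := k.+1%:R^-1; set q := fine (P (S k)).
have delta_gt0 : 0 < delta by rewrite invr_gt0.
have PSk : P (S k) = q%:E by rewrite fineK // fin_num_measure.
have q_gt0 : 0 < q by rewrite -lte_fin -PSk.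
have q_le1 : q <= 1 by rewrite -lee_fin -PSk probability_le1.
have B0 := B_gt0 hw.
have dq_gt0 : 0 < delta * q by rewrite mulr_gt0.
have dq_le : delta * q <= delta by rewrite -[leRHS]mulr1 ler_pM2l.
exists (4 * B / (delta * q)) => mu; rewrite ler_pdivrMr // => mu_large.
have mu_gt0 : 0 < mu by rewrite -(pmulr_lgt0 _ dq_gt0); lra.
have Bmu : B / mu <= delta * q / 4 by rewrite ler_pdivrMr //; nra.
have Bmu_delta : B / mu <= delta / 2 by apply: le_trans Bmu _; lra.
have G_le : (Gfun P X p alpha (Dmu p w alpha mu) (Cmu p w alpha mu)
    <= (B / mu - delta / 2 * q)%:E)%E.
  apply: (@probability_integral_le _ _ _ P
    (fun om => Gintegrand p w alpha mu (X om))); first exact: mS.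
  - by rewrite divr_ge0 ?ltW.
  - by rewrite divr_ge0 ?ltW.
  - by move=> om; exact: Gintegrand_le.
  - by move=> om; exact: Gintegrand_le_neg.
by apply: le_lt_trans G_le _; rewrite lte_fin; nra.
Qed.
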